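(* Let $G$ be a graph on $\{1,\dots,n\}$, $(S_1,\dots,S_n)$ a realization of $G$, and $w\in\mathbb{R}^n_{\ge0}$. For positive integers $k$ define $\beta(G,w,k)=\max_\rho\sum_{i=1}^nw_i|\operatorname{tr}(\rho S_i)|^k$, maximum over density matrices $\rho$. Then $\lim_{k\to\infty}\beta(G,w,k)=\alpha(G,w)$.
   Context: A realization of $G$ is a tuple of Pauli strings (tensor products of matrices from $\{I,X,Y,Z\}$) of common length with $S_i,S_j$ anticommuting iff $i\sim j$ in $G$ and commuting otherwise. $\alpha(G,w)=\max\{\sum_{i\in I}w_i:I\text{ an independent set of }G\}$. *)

From HB Require Import structures.
From mathcomp Require Import all_boot all_order all_algebra.
From mathcomp Require Import all_classical all_reals all_analysis.
From mathcomp Require Import complex.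
Set Implicit Arguments. Unset Strict Implicit. Unset Printing Implicit Defensive.
Import Order.TTheory GRing.Theory Num.Theory.
Local Open Scope ring_scope.

Definition is_graph (n : nat) (G : rel 'I_n) : Prop :=
  symmetric G /\ irreflexive G.

Definition independent (n : nat) (G : rel 'I_n) (I : {set 'I_n}) : bool :=
  [forall i in I, forall j in I, ~~ G i j].

(* alpha(G,w) = max over independent sets I of sum_{i in I} w_i
   (the empty set is independent and w >= 0, so folding max from 0 is exact) *)
Definition alpha (R : realType) (n : nat) (G : rel 'I_n) (w : 'I_n -> R) : R :=
  \big[Num.max/0]_(I : {set 'I_n} | independent G I) \sum_(i in I) w i.

(* labels: 0 = I, 1 = X, 2 = Y, 3 = Z ; entries indexed by bits (false = 0, true = 1) *)
Definition pauli_entry (R : rcfType) (a : 'I_4) (x y : bool) : R[i] :=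
  match val a with
  | 0 => if x == y then 1 else 0
  | 1 => if x == y then 0 else 1
  | 2 => if x == y then 0 else (if x then 'i%C else - 'i%C)
  | _ => if x == y then (if x then -1 else 1) else 0
  end.

Definition bit (q i : nat) : bool := odd (i %/ 2 ^ q).

(* The Pauli string s_{m-1} (x) ... (x) s_0 as a 2^m x 2^m complex matrix:
   the Kronecker product written out entrywise in the computational basis. *)
Definition pauli_string (R : rcfType) (m : nat) (s : {ffun 'I_m -> 'I_4})
  : 'M[R[i]]_(2 ^ m) :=
  \matrix_(i, j) \prod_(q < m) pauli_entry R (s q) (bit q i) (bit q j).

Definition realization (R : rcfType) (n m : nat) (G : rel 'I_n)
  (S : 'I_n -> {ffun 'I_m -> 'I_4}) : Prop :=
  forall i j : 'I_n,
    (pauli_string R (S i) *m pauli_string R (S j)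
       = - (pauli_string R (S j) *m pauli_string R (S i)) <-> G i j) /\
    (~~ G i j -> pauli_string R (S i) *m pauli_string R (S j)
                 = pauli_string R (S j) *m pauli_string R (S i)).

Definition adjmx (R : rcfType) (p q : nat) (A : 'M[R[i]]_(p, q)) : 'M[R[i]]_(q, p) :=
  (map_mx (@conjc R) A)^T.

Definition psd (R : rcfType) (N : nat) (rho : 'M[R[i]]_N) : Prop :=
  forall v : 'cV[R[i]]_N, 0 <= (adjmx v *m rho *m v) 0 0.

Definition density (R : rcfType) (N : nat) (rho : 'M[R[i]]_N) : Prop :=
  psd rho /\ \tr rho = 1.

(* beta(G,w,k) = max over density matrices rho of sum_i w_i |tr(rho S_i)|^k,
   expressed as the supremum of the (attained) set of values *)
Definition beta (R : realType) (n m : nat) (S : 'I_n -> {ffun 'I_m -> 'I_4})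
  (w : 'I_n -> R) (k : nat) : R :=
  sup [set x : R | exists rho : 'M[R[i]]_(2 ^ m), density rho /\
         x = \sum_(i < n) w i * (Normc.normc (\tr (rho *m pauli_string R (S i)))) ^+ k].

(** Pauli strings are Hermitian involutions, so for a density matrix [rho] each
    expectation [x_i = tr (rho S_i)] is real with [x_i^2 <= 1]; if moreover [S_i] and
    [S_j] anticommute, then [x_i S_i + x_j S_j] squares to [(x_i^2 + x_j^2) 1], which
    forces [x_i^2 + x_j^2 <= 1].  Hence the indices with [|x_i| > 3/4] form an
    independent set, and [beta (k+1) <= alpha + (sum_i w_i) (3/4)^k].  Conversely, the
    strings indexed by an independent set commute pairwise; the pure state of a common
    eigenvector has [|x_i| = 1] on that set, so [alpha <= beta (k+1)].  The limit
    follows by squeezing. *)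

From mathcomp Require Import ring lra zify.
From HB Require Import structures.
From mathcomp Require Import all_boot all_order all_algebra.
From mathcomp Require Import all_classical all_reals all_analysis.
From mathcomp Require Import complex spectral.
Import Order.TTheory GRing.Theory Num.Theory numFieldNormedType.Exports.
Local Open Scope ring_scope.

Lemma bit_expansion (m k : nat) :
  k = (\sum_(q < m) bit q k * 2 ^ q + 2 ^ m * (k %/ 2 ^ m))%N.
Proof.
elim: m => [|m IHm]; first by rewrite big_ord0 expn0 mul1n divn1.
rewrite big_ord_recr /= {1}IHm -addnA; congr (_ + _)%N.
rewrite /bit {1}(divn_eq (k %/ 2 ^ m) 2) modn2 -divnMA -expnSr expnS.
rewrite mulnDr [(odd _ * _)%N]mulnC addnC; congr (_ + _)%N.
nia.
Qed.

Lemma bit_inj (m i j : nat) : (i < 2 ^ m)%N -> (j < 2 ^ m)%N ->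
  (forall q, (q < m)%N -> bit q i = bit q j) -> i = j.
Proof.
move=> lt_i lt_j eq_bits.
rewrite (bit_expansion m i) (bit_expansion m j) !divn_small // !muln0 !addn0.
by apply: eq_bigr => q _; rewrite eq_bits.
Qed.

Lemma sum_exp2_bits (V : nmodType) (m : nat) (F : {ffun 'I_m -> bool} -> V) :
  \sum_(k < 2 ^ m) F [ffun q : 'I_m => bit q k] = \sum_f F f.
Proof.
pose bits (k : 'I_(2 ^ m)) := [ffun q : 'I_m => bit q k].
have bits_inj : injective bits.
  move=> a b /ffunP eq_ab; apply/val_inj/(@bit_inj m); rewrite ?ltn_ord // => q lt_qm.
  by have := eq_ab (Ordinal lt_qm); rewrite !ffunE.
have bits_bij : bijective bits.
  by apply: (inj_card_bij bits_inj); rewrite card_ffun card_bool !fintype.card_ord.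
by rewrite (reindex bits) //; exact: onW_bij.
Qed.

Section ConjugateTranspose.
Variable R : rcfType.

Lemma adjmxM p q r (A : 'M[R[i]]_(p, q)) (B : 'M[R[i]]_(q, r)) :
  adjmx (A *m B) = adjmx B *m adjmx A.
Proof. by rewrite /adjmx map_mxM trmx_mul. Qed.

Lemma adjmxD p q (A B : 'M[R[i]]_(p, q)) : adjmx (A + B) = adjmx A + adjmx B.
Proof. by apply/matrixP => i j; rewrite !mxE rmorphD. Qed.

Lemma adjmxZ p q (a : R[i]) (A : 'M[R[i]]_(p, q)) : adjmx (a *: A) = conjc a *: adjmx A.
Proof. by apply/matrixP => i j; rewrite !mxE rmorphM. Qed.

Lemma adjmx_scalar p (a : R[i]) : adjmx (a%:M : 'M[R[i]]_p) = (conjc a)%:M.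
Proof.
apply/matrixP => i j; rewrite !mxE eq_sym.
by case: (i == j); rewrite ?mulr1n ?mulr0n ?rmorph0.
Qed.

End ConjugateTranspose.

Section PauliStrings.
Variable R : rcfType.
Local Open Scope complex_scope.

Lemma mulmx_pauli_string m (s t : {ffun 'I_m -> 'I_4}) i j :
  (pauli_string R s *m pauli_string R t) i j =
  \prod_(q < m) \sum_(b : bool)
     pauli_entry R (s q) (bit q i) b * pauli_entry R (t q) b (bit q j).
Proof.
rewrite mxE bigA_distr_bigA /= -sum_exp2_bits.
apply: eq_bigr => k _; rewrite !mxE -big_split /=.
by apply: eq_bigr => q _; rewrite !ffunE.
Qed.

Lemma pauli_entry_sqr (a : 'I_4) x y :
  \sum_(b : bool) pauli_entry R a x b * pauli_entry R a b y = (x == y)%:R.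
Proof.
rewrite big_bool; case: a => [[|[|[|[|a]]]] lt_a4] //; case: x; case: y;
  rewrite /pauli_entry /= ?mulr0 ?mul0r ?addr0 ?add0r ?mulr1 ?mul1r //;
  by rewrite ?mulNr ?mulrN ?opprK -?expr2 ?expr1n ?sqr_i ?opprK.
Qed.

Lemma conjc_pauli_entry (a : 'I_4) x y :
  (pauli_entry R a y x)^* = pauli_entry R a x y.
Proof.
case: a => [[|[|[|[|a]]]] lt_a4] //; case: x; case: y;
  rewrite /pauli_entry /= ?rmorph0 ?rmorph1 ?rmorphN ?rmorph1 //;
  by apply/eqP; rewrite eq_complex /= ?oppr0 ?opprK ?eqxx.
Qed.

Lemma pauli_string_sqr m (s : {ffun 'I_m -> 'I_4}) :
  pauli_string R s *m pauli_string R s = 1%:M.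
Proof.
apply/matrixP => i j; rewrite mulmx_pauli_string mxE.
under eq_bigr do rewrite pauli_entry_sqr.
have [<-|neq_ij] := eqVneq i j; first by rewrite big1 // => q _; rewrite eqxx.
have [q neq_bit] : exists q : 'I_m, bit q i != bit q j.
  apply/existsP; apply: contraNT neq_ij => /existsPn same_bits.
  apply/eqP/val_inj/(@bit_inj m); rewrite ?ltn_ord // => q lt_qm.
  by have := same_bits (Ordinal lt_qm); rewrite negbK => /eqP.
by rewrite (bigD1 q) //= (negbTE neq_bit) mul0r.
Qed.

Lemma adjmx_pauli_string m (s : {ffun 'I_m -> 'I_4}) :
  adjmx (pauli_string R s) = pauli_string R s.
Proof.
apply/matrixP => i j; rewrite !mxE rmorph_prod.
by apply: eq_bigr => q _; exact: conjc_pauli_entry.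
Qed.

End PauliStrings.

Section Expectations.
Variable R : rcfType.
Local Notation C := R[i].
Local Open Scope complex_scope.

Lemma psd_mxtrace_mul_sqr N (rho H : 'M[C]_N) : psd rho -> adjmx H = H ->
  0 <= \tr (rho *m (H *m H)).
Proof.
move=> rho_psd H_herm.
rewrite mulmxA mxtrace_mulC mulmxA /mxtrace; apply: sumr_ge0 => k _.
have -> : (H *m rho *m H) k k = (adjmx (col k H) *m rho *m col k H) 0 0.
  rewrite !mxE; apply: eq_bigr => b _; rewrite !mxE; congr (_ * _).
  by apply: eq_bigr => a _; rewrite !mxE -[in LHS]H_herm !mxE.
exact: rho_psd.
Qed.

Lemma mxtrace_mul_sqr_shift {N} {rho M : 'M[C]_N} (t : C) {c : C} :
  \tr rho = 1 -> M *m M = c%:M ->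
  \tr (rho *m ((t%:M - M) *m (t%:M - M))) = t ^+ 2 + c - t *+ 2 * \tr (rho *m M).
Proof.
move=> tr_rho sqr_M.
have -> : (t%:M - M) *m (t%:M - M) = (t ^+ 2)%:M + c%:M - (t *+ 2) *: M.
  rewrite mulmxBl !mulmxBr sqr_M !mul_scalar_mx mul_mx_scalar scale_scalar_mx.
  by rewrite -expr2 mulr2n scalerDl opprB opprD addrACA.
rewrite mulmxBr mulmxDr !mul_mx_scalar -scalemxAr raddfB raddfD /= !mxtraceZ.
by rewrite tr_rho !mulr1.
Qed.

(* The variance argument: [tr (rho (t - M)^2) >= 0] for real [t]; [t = 1] and
   [t = -1] make [tr (rho M)] real, and [t = tr (rho M)] bounds its square by [c]. *)
Lemma density_expectation_sqr_le {N} {rho M : 'M[C]_N} {c : R} :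
  density rho -> adjmx M = M -> M *m M = (c%:C)%:M ->
  exists a : R, \tr (rho *m M) = a%:C /\ a ^+ 2 <= c.
Proof.
move=> [rho_psd tr_rho] M_herm sqr_M.
set z := \tr (rho *m M).
have shifted_variance_ge0 (t : C) : t^* = t -> 0 <= t ^+ 2 + c%:C - t *+ 2 * z.
  move=> t_real; rewrite -(mxtrace_mul_sqr_shift t tr_rho sqr_M).
  apply: psd_mxtrace_mul_sqr => //.
  by rewrite adjmxD adjmx_scalar t_real -scaleN1r adjmxZ M_herm rmorphN rmorph1 scaleN1r.
have at1 := shifted_variance_ge0 1 (rmorph1 _).
have atN1 := shifted_variance_ge0 (-1) ltac:(by rewrite rmorphN rmorph1).
rewrite expr1n in at1; rewrite sqrrN expr1n mulNrn mulNr opprK in atN1.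
have z_real : z \is Num.real.
  have -> : z = ((1 + c%:C + 2 * z) - (1 + c%:C - 2 * z)) / 4 by field.
  by apply: realM; [apply: realB; exact: ger0_real | rewrite realV; exact: realn].
have [a z_eq] : exists a : R, z = a%:C by apply/complex_realP.
exists a; split => //.
have := shifted_variance_ge0 a%:C (conjc_real _); rewrite z_eq.
rewrite -rmorphXn -rmorphMn -rmorphM -!rmorphD -rmorphB lecR => ?; nra.
Qed.

Lemma normc_real (a : R) : Normc.normc a%:C = `|a|.
Proof. by rewrite /Normc.normc /= expr0n /= addr0 sqrtr_sqr. Qed.

Lemma pauli_expectation_real {m} {rho : 'M[C]_(2 ^ m)} (s : {ffun 'I_m -> 'I_4}) :
  density rho -> exists a : R, \tr (rho *m pauli_string R s) = a%:C /\ a ^+ 2 <= 1.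
Proof.
move=> rho_density; apply: density_expectation_sqr_le => //.
  exact: adjmx_pauli_string.
by rewrite pauli_string_sqr rmorph1.
Qed.

Lemma normc_pauli_expectation_le1 {m} {rho : 'M[C]_(2 ^ m)} (s : {ffun 'I_m -> 'I_4}) :
  density rho -> Normc.normc (\tr (rho *m pauli_string R s)) <= 1.
Proof.
move=> /(pauli_expectation_real s) [a [-> sqr_a_le1]]; rewrite normc_real.
by rewrite -(ler_pXn2r (n := 2)) ?nnegrE // expr1n real_normK ?num_real.
Qed.

Lemma anticomm_pauli_expectations_le1 {m} {rho : 'M[C]_(2 ^ m)}
    {s t : {ffun 'I_m -> 'I_4}} : density rho ->
  pauli_string R s *m pauli_string R t = - (pauli_string R t *m pauli_string R s) ->
  Normc.normc (\tr (rho *m pauli_string R s)) ^+ 2 +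
  Normc.normc (\tr (rho *m pauli_string R t)) ^+ 2 <= 1.
Proof.
move=> rho_density anticomm.
have [a [tr_s _]] := pauli_expectation_real s rho_density.
have [b [tr_t _]] := pauli_expectation_real t rho_density.
rewrite tr_s tr_t !normc_real !real_normK ?num_real //.
set A := pauli_string R s in anticomm tr_s *; set B := pauli_string R t in anticomm tr_t *.
pose M := a%:C *: A + b%:C *: B.
have M_herm : adjmx M = M.
  by rewrite /M adjmxD !adjmxZ !conjc_real !adjmx_pauli_string.
have sqr_M : M *m M = ((a ^+ 2 + b ^+ 2)%:C)%:M.
  rewrite /M mulmxDl !mulmxDr -!scalemxAl -!scalemxAr !scalerA.
  rewrite !pauli_string_sqr anticomm scalerN addrA [X in X + _ = _]addrAC -addrA.
  rewrite [b%:C * a%:C]mulrC subrr addr0 !scale_scalar_mx !mulr1 -!rmorphM rmorphD.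
  by rewrite -!expr2; apply/matrixP => i j; rewrite !mxE mulrnDl.
have [c [tr_M sqr_c]] := density_expectation_sqr_le rho_density M_herm sqr_M.
move: tr_M; rewrite /M mulmxDr -!scalemxAr raddfD /= !mxtraceZ tr_s tr_t.
rewrite -!rmorphM -rmorphD => /complexI c_eq.
rewrite -c_eq -!expr2 in sqr_c; nra.
Qed.

End Expectations.

Section PureStates.
Variable R : rcfType.
Local Notation C := R[i].
Local Open Scope complex_scope.

Lemma normc_ge0 (z : C) : 0 <= Normc.normc z.
Proof. by case: z => a b; rewrite /Normc.normc sqrtr_ge0. Qed.

Lemma normc_eq1 (l : C) : l * l = 1 -> Normc.normc l = 1.
Proof.
move=> sqr_l; have := Normc.normcM l l; rewrite sqr_l Normc.normc1.
by have := normc_ge0 l; move: (Normc.normc l) => a ? ?; nra.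
Qed.

Lemma adjmx_mulmx_ge0 p (y : 'cV[C]_p) : 0 <= (adjmx y *m y) 0 0.
Proof. by rewrite mxE; apply: sumr_ge0 => k _; rewrite !mxE mulrC mulcJ_ge0. Qed.

Lemma mulmx_adjmx_gt0 {p} {v : 'rV[C]_p} : v != 0 -> 0 < (v *m adjmx v) 0 0.
Proof.
have entry_ge0 k : 0 <= v 0 k * (adjmx v) k 0 by rewrite !mxE mulcJ_ge0.
move=> v_neq0; rewrite lt_def mxE sumr_ge0 // andbT.
apply: contra v_neq0 => /eqP /psumr_eq0P v_eq0; apply/eqP/matrixP => i j.
have /eqP := v_eq0 (fun k _ => entry_ge0 k) j isT.
by rewrite (ord1 i) !mxE mulf_eq0 conjc_eq0 orbb => /eqP.
Qed.

Lemma density_pure p (v : 'rV[C]_p) : v != 0 ->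
  density (((v *m adjmx v) 0 0)^-1 *: (adjmx v *m v)).
Proof.
move=> v_neq0; have norm_gt0 := mulmx_adjmx_gt0 v_neq0; split.
  move=> u; rewrite -scalemxAr -scalemxAl mxE mulmxA -adjmxM -mulmxA.
  by apply: mulr_ge0; [rewrite invr_ge0 ltW | exact: adjmx_mulmx_ge0].
by rewrite mxtraceZ mxtrace_mulC /mxtrace big_ord1 mulVf ?gt_eqF.
Qed.

Lemma commuting_pauli_eigenstate m (ss : seq {ffun 'I_m -> 'I_4}) :
    {in ss &, forall s t, comm_mx (pauli_string R s) (pauli_string R t)} ->
  exists2 rho : 'M[C]_(2 ^ m), density rho &
    {in ss, forall s, Normc.normc (\tr (rho *m pauli_string R s)) = 1}.
Proof.
move=> comm_ss.
have comm_As : {in [seq pauli_string R s | s <- ss] &, forall A B, comm_mx A B}.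
  by move=> _ _ /mapP[s s_in ->] /mapP[t t_in ->]; exact: comm_ss.
have [v v_neq0 /allP v_eigen] := common_eigenvector (expn_gt0 2 m) comm_As.
have norm_gt0 := mulmx_adjmx_gt0 v_neq0.
exists (((v *m adjmx v) 0 0)^-1 *: (adjmx v *m v)); first exact: density_pure.
move=> s s_in; have /sub_rVP[l v_eq] := v_eigen _ (map_f _ s_in).
have sqr_l : l * l = 1.
  have : (l * l) *: v = 1 *: v.
    by rewrite -scalerA -v_eq scalemxAl -v_eq -mulmxA pauli_string_sqr mulmx1 scale1r.
  by move/eqP; rewrite -subr_eq0 -scalerBl scaler_eq0 (negbTE v_neq0) orbF subr_eq0 => /eqP.
rewrite -scalemxAl mxtraceZ -mulmxA mxtrace_mulC v_eq -scalemxAl mxtraceZ.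
by rewrite /mxtrace big_ord1 mulrCA mulVf ?gt_eqF // mulr1 normc_eq1.
Qed.

End PureStates.

Lemma independent_set0 {n} (G : rel 'I_n) : independent G finset.set0.
Proof. by apply/forallP => i; rewrite inE. Qed.

Lemma sum_le_alpha (R : realType) n (G : rel 'I_n) (w : 'I_n -> R) (I : {set 'I_n}) :
  independent G I -> \sum_(i in I) w i <= alpha G w.
Proof. by move=> I_indep; rewrite /alpha (bigD1 I) //= le_max lexx. Qed.

Section BetaBounds.
Variables (R : realType) (n m : nat) (G : rel 'I_n).
Variables (S : 'I_n -> {ffun 'I_m -> 'I_4}) (w : 'I_n -> R).
Hypotheses (S_realizes : realization R G S) (w_ge0 : forall i, 0 <= w i).

Let x (rho : 'M[R[i]]_(2 ^ m)) i := Normc.normc (\tr (rho *m pauli_string R (S i))).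
Let value rho k := \sum_(i < n) w i * x rho i ^+ k.

Lemma independent_eigenstate {I : {set 'I_n}} : independent G I ->
  exists2 rho, density rho & forall i, i \in I -> x rho i = 1.
Proof.
move=> I_indep.
have [|rho rho_density x_eq1] := @commuting_pauli_eigenstate R m [seq S i | i <- enum I].
  move=> _ _ /mapP[i + ->] /mapP[j + ->]; rewrite !mem_enum => i_in j_in.
  apply: (proj2 (S_realizes i j)).
  by move/forallP: I_indep => /(_ i)/implyP/(_ i_in)/forallP/(_ j)/implyP/(_ j_in).
by exists rho => // i i_in; apply: x_eq1; rewrite map_f ?mem_enum.
Qed.

(* [3/4] works because [2 (3/4)^2 > 1]. *)
Lemma large_expectations_independent rho : density rho ->
  independent G [set i | 3 / 4 < x rho i].
Proof.
move=> rho_density; apply/forallP => i; apply/implyP; rewrite inE => x_i_gt.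
apply/forallP => j; apply/implyP; rewrite inE => x_j_gt; apply/negP => G_ij.
have := anticomm_pauli_expectations_le1 _ rho_density ((proj1 (S_realizes i j)).2 G_ij).
by rewrite -/(x rho i) -/(x rho j); nra.
Qed.

Lemma value_le rho k : density rho ->
  value rho k.+1 <= alpha G w + (\sum_i w i) * (3 / 4) ^+ k.
Proof.
move=> rho_density; set T := [set i | 3 / 4 < x rho i].
have T_indep : independent G T by exact: large_expectations_independent.
apply: (@le_trans _ _ (\sum_i ((if i \in T then w i else 0) + w i * (3 / 4) ^+ k))).
  apply: ler_sum => i _; rewrite inE.
  have x_ge0 : 0 <= x rho i by exact: normc_ge0.
  have x_le1 : x rho i <= 1 by exact: normc_pauli_expectation_le1.
  have [x_gt|x_le] := ltrP (3 / 4) (x rho i).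
    apply: (@le_trans _ _ (w i)); first by rewrite ler_piMr // exprn_ile1.
    by rewrite lerDl mulr_ge0 ?exprn_ge0.
  rewrite add0r ler_wpM2l //.
  have : x rho i ^+ k.+1 <= (3 / 4) ^+ k.+1 by rewrite lerXn2r ?nnegrE //; lra.
  by move/le_trans; apply; rewrite exprSr ler_piMr ?exprn_ge0 //; lra.
by rewrite big_split /= -big_mkcond -mulr_suml lerD2r sum_le_alpha.
Qed.

Lemma value_le_beta rho k : density rho -> value rho k.+1 <= beta S w k.+1.
Proof.
move=> rho_density; apply: sup_upper_bound; last by exists rho.
split; first by exists (value rho k.+1), rho.
exists (alpha G w + (\sum_i w i) * (3 / 4) ^+ k).
by move=> _ [sigma [sigma_density ->]]; exact: value_le.
Qed.

Lemma beta_le k : beta S w k.+1 <= alpha G w + (\sum_i w i) * (3 / 4) ^+ k.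
Proof.
apply: ge_sup => [|_ [rho [rho_density ->]]]; last exact: value_le.
have [rho rho_density _] := independent_eigenstate (independent_set0 G).
by exists (value rho k.+1), rho.
Qed.

Lemma alpha_le_beta k : alpha G w <= beta S w k.+1.
Proof.
have sum_le I : independent G I -> \sum_(i in I) w i <= beta S w k.+1.
  move=> I_indep; have [rho rho_density x_eq1] := independent_eigenstate I_indep.
  apply: (le_trans _ (value_le_beta _ k rho_density)); rewrite big_mkcond /=.
  apply: ler_sum => i _; case: ifP => [/x_eq1 ->|_]; first by rewrite expr1n mulr1.
  by rewrite mulr_ge0 ?exprn_ge0 ?normc_ge0.
rewrite /alpha; elim/big_ind: _ => [|a b a_le b_le|]; last exact: sum_le.
  by have := sum_le _ (independent_set0 G); rewrite big_set0.
by rewrite ge_max a_le b_le.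
Qed.

End BetaBounds.

Local Open Scope classical_set_scope.

Theorem proposition2 (R : realType) (n m : nat) (G : rel 'I_n)
  (S : 'I_n -> {ffun 'I_m -> 'I_4}) (w : 'I_n -> R) :
  is_graph G -> realization R G S -> (forall i, 0 <= w i) ->
  (fun k : nat => beta S w k.+1) @ \oo --> alpha G w.
Proof.
move=> _ S_realizes w_ge0.
pose bound k := alpha G w + (\sum_i w i) * (3 / 4) ^+ k.
apply: (@squeeze_cvgr _ _ _ _ (fun=> alpha G w) bound).
- by apply: nearW => k; rewrite alpha_le_beta ?beta_le.
- exact: cvg_cst.
rewrite -[X in _ --> X]addr0 -[X in _ --> _ + X](mulr0 (\sum_i w i)).
apply: cvgD; first exact: cvg_cst.
apply: cvgM; first exact: cvg_cst.
by apply: cvg_expr; rewrite ger0_norm // ltr_pdivrMr // mul1r ltr_nat.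
Qed.
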